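(* Consider a multi-sender single-uniprior index-coding instance with binary messages, information-flow graph $\mathcal{G}$ and message graph $\mathcal{U}$, in which each message is known to exactly one sender (i.e., the senders' message sets $\mathcal{M}_1,\dots,\mathcal{M}_S$ partition the message set). Then \[ \tilde{\ell}^*(\mathcal{G},\mathcal{U}) = V_{\mathrm{out}}(\mathcal{G}) - N_{\mathrm{conn}}(\mathcal{G},\mathcal{U}), \] where $N_{\mathrm{conn}}(\mathcal{G},\mathcal{U})$ is the number of message-connected leaf SCCs of $\mathcal{G}$.
   Context: Multi-sender single-uniprior index coding with binary messages: there are $n$ receivers and $n$ independent messages $x_1,\dots,x_n$, each a single bit uniformly distributed on $\{0,1\}$. Receiver $i$ knows $x_i$ a priori and requests a set of messages not containing $x_i$. The information-flow graph is the directed graph $\mathcal{G}=(\mathcal{V},\mathcal{A})$, $\mathcal{V}=\{1,\dots,n\}$, with an arc $(j\to i)$ iff receiver $i$ requests $x_j$. There are $S$ senders; sender $s$ knows a subset $\mathcal{M}_s$ of the messages, and every message is known to some sender. An index code consists of, for each sender $s$, an encoding function mapping the messages in $\mathcal{M}_s$ to $\ell_s$ bits, and for each receiver $i$ a decoding function that, from all senders' outputs together with $x_i$, returns every message requested by $i$, for all message values; its length is $\sum_s \ell_s$. $\tilde{\ell}^*(\mathcal{G},\mathcal{U})$ is the minimum length of an index code for the instance. The message graph $\mathcal{U}$ is the undirected graph on $\mathcal{V}$ with an edge $\{i,j\}$ iff some sender knows both $x_i$ and $x_j$. A leaf vertex of $\mathcal{G}$ has no outgoing arcs; $V_{\mathrm{out}}(\mathcal{G})$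 is the number of non-leaf vertices. A leaf SCC of $\mathcal{G}$ is a strongly connected component with at least two vertices and no arc from it to a vertex outside it. A leaf SCC with vertex set $\mathcal{V}_S$ is message-connected iff the subgraph of $\mathcal{U}$ induced by $\mathcal{V}_S$ is connected. *)

From mathcomp Require Import all_boot.
Set Implicit Arguments. Unset Strict Implicit. Unset Printing Implicit Defensive.

(* Vertices / receivers / messages are indexed by 'I_n.
   Information-flow graph G : rel 'I_n, with  G j i  meaning the arc (j -> i),
   i.e. receiver i requests message x_j. *)

Section Defs.
Variables (n S : nat).

Definition depends_only_on (A : {set 'I_n}) (T : Type)
  (f : {ffun 'I_n -> bool} -> T) : Prop :=
  forall x y : {ffun 'I_n -> bool}, (forall j, j \in A -> x j = y j) -> f x = f y.

Definition index_code_of_length (G : rel 'I_n) (M : 'I_S -> {set 'I_n})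
    (L : nat) : Prop :=
  exists (l : 'I_S -> nat)
         (E : forall s : 'I_S, {ffun 'I_n -> bool} -> (l s).-tuple bool)
         (D : 'I_n -> (forall s : 'I_S, (l s).-tuple bool) -> bool -> 'I_n -> bool),
    [/\ forall s, depends_only_on (M s) (E s),
        forall (x : {ffun 'I_n -> bool}) (i j : 'I_n),
          G j i -> D i (fun s => E s x) (x i) j = x j
      & \sum_(s < S) l s = L].

Definition min_index_code_length (G : rel 'I_n) (M : 'I_S -> {set 'I_n})
    (L : nat) : Prop :=
  index_code_of_length G M L /\
  forall L', index_code_of_length G M L' -> L <= L'.

Definition msg_edge (M : 'I_S -> {set 'I_n}) : rel 'I_n :=
  fun i j => (i != j) && [exists s, (i \in M s) && (j \in M s)].

Definition V_out (G : rel 'I_n) : nat := #|[set i | [exists j, G i j]]|.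

Definition is_scc (G : rel 'I_n) (C : {set 'I_n}) : bool :=
  [exists a, (a \in C) &&
     (C == [set b | connect G a b && connect G b a])].

Definition is_leaf_scc (G : rel 'I_n) (C : {set 'I_n}) : bool :=
  [&& is_scc G C, 1 < #|C| &
      [forall a, forall b, ((a \in C) && G a b) ==> (b \in C)]].

Definition msg_connected (M : 'I_S -> {set 'I_n}) (C : {set 'I_n}) : bool :=
  [forall a, forall b, ((a \in C) && (b \in C)) ==>
     connect [rel u v | [&& msg_edge M u v, u \in C & v \in C]] a b].

Definition N_conn (G : rel 'I_n) (M : 'I_S -> {set 'I_n}) : nat :=
  #|[set C : {set 'I_n} | is_leaf_scc G C && msg_connected M C]|.

End Defs.

From mathcomp Require Import all_boot.
From Stdlib Require Import FunctionalExtensionality.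
Set Implicit Arguments. Unset Strict Implicit. Unset Printing Implicit Defensive.

(* Achievability: each sender sends one bit for every non-leaf vertex it owns,
   except that each message-connected leaf SCC C has one pivot r whose bit is
   dropped, while every other v in C sends x_v + x_r instead of x_v. All of C is
   owned by one sender, so these bits are computable; a receiver of a message
   in C lies in C (no arc leaves C), gets x_r from its own bit and x_i, and then
   the requested x_v.
   Converse: if two message vectors differ only on the vertices coded by sender
   s and all codewords agree, the disagreement set is closed under arcs (each
   receiver decodes its in-neighbours from the codewords and its own message).
   Being made of non-leaf vertices, it would contain a leaf SCC owned by s,
   hence message-connected, hence containing its pivot, which s does not code.
   So s distinguishes all assignments of its coded vertices. *)

Section StronglyConnectedComponents.
Variables (n : nat) (G : rel 'I_n).

Definition scc (v : 'I_n) : {set 'I_n} :=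
  [set u | connect G v u && connect G u v].

Lemma scc_refl v : v \in scc v.
Proof. by rewrite inE !connect0. Qed.

Lemma scc_eq a v : v \in scc a -> scc v = scc a.
Proof.
rewrite inE => /andP [av va]; apply/setP => b; rewrite !inE.
apply/andP/andP => [[vb bv]|[ab ba]]; split.
- exact: connect_trans av vb.
- exact: connect_trans bv va.
- exact: connect_trans va ab.
- exact: connect_trans ba av.
Qed.

Lemma is_sccP C : is_scc G C -> exists a, C = scc a.
Proof. by case/existsP => a /andP [_ /eqP ->]; exists a. Qed.

Definition scc_rep (v : 'I_n) : 'I_n := odflt v [pick u in scc v].

Lemma scc_rep_in v : scc_rep v \in scc v.
Proof. by rewrite /scc_rep; case: pickP => [u //| /(_ v)]; rewrite scc_refl. Qed.

Lemma scc_rep_eq u v : scc u = scc v -> scc_rep u = scc_rep v.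
Proof.
by rewrite /scc_rep => ->; case: pickP => // /(_ v); rewrite scc_refl.
Qed.

Lemma connect_closed_set (D : {set 'I_n}) a b :
  (forall v w, v \in D -> G v w -> w \in D) ->
  connect G a b -> a \in D -> b \in D.
Proof.
move=> closedD /connectP [p]; elim: p a => [|c p IH] a /=; first by move=> _ ->.
by case/andP => ac pc e aD; exact: IH c pc e (closedD _ _ aD ac).
Qed.

Lemma leaf_scc_closed v w : is_leaf_scc G (scc v) -> G v w -> w \in scc v.
Proof.
case/and3P => _ _ /forallP /(_ v) /forallP /(_ w) /implyP closedC vw.
by apply: closedC; rewrite scc_refl.
Qed.

Lemma leaf_scc_out v : is_leaf_scc G (scc v) -> [exists w, G v w].
Proof.
case/and3P => _ /card_gt1P [x [y [xC yC xy]]] _.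
have [u [vu uv]] : exists u, connect G v u /\ u != v.
  have [xv | xv] := eqVneq x v.
  - by exists y; split; [move: yC; rewrite inE => /andP [] | rewrite eq_sym -xv].
  - by exists x; split; [move: xC; rewrite inE => /andP [] |].
case/connectP: vu uv => [[|u' p]] /=; first by move=> _ ->; rewrite eqxx.
by case/andP => vu' _ _ _; apply/existsP; exists u'.
Qed.

Hypothesis loopless : forall v, ~~ G v v.

(* A vertex of D with fewest reachable vertices reaches back from everything
   it reaches, so its SCC is its whole forward closure. *)
Lemma closed_set_leaf_scc (D : {set 'I_n}) a0 : a0 \in D ->
  (forall v w, v \in D -> G v w -> w \in D) ->
  (forall v, v \in D -> exists w, G v w) ->
  exists a, is_leaf_scc G (scc a) && (scc a \subset D).
Proof.
move=> a0D closedD outD.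
pose reach v := [set b | connect G v b].
case: (arg_minnP (fun v => #|reach v|) a0D) => a aD amin.
have scc_reach b : (b \in scc a) = connect G a b.
  rewrite inE; case ab: (connect G a b) => //=.
  have sub : reach b \subset reach a.
    by apply/subsetP => c; rewrite !inE; exact: connect_trans ab.
  have /eqP reach_ab : reach b == reach a.
    by rewrite eqEcard sub; exact: amin (connect_closed_set closedD ab aD).
  have : a \in reach b by rewrite reach_ab inE connect0.
  by rewrite inE.
exists a; apply/andP; split; last first.
  by apply/subsetP => b; rewrite scc_reach => ab; exact: connect_closed_set ab aD.
have [w aw] := outD a aD.
apply/and3P; split.
- by apply/existsP; exists a; rewrite scc_refl eqxx.
- apply/card_gt1P; exists a, w; rewrite scc_refl scc_reach connect1 //.
  by split=> //; apply/eqP => aw'; move: (loopless a); rewrite {2}aw' aw.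
- apply/forallP => u; apply/forallP => v; apply/implyP => /andP [].
  by rewrite !scc_reach => au uv; exact: connect_trans au (connect1 uv).
Qed.

End StronglyConnectedComponents.

Section IndexCode.
Variables (n S : nat) (G : rel 'I_n) (l : 'I_S -> nat).
Variables (E : forall s : 'I_S, {ffun 'I_n -> bool} -> (l s).-tuple bool)
  (D : 'I_n -> (forall s : 'I_S, (l s).-tuple bool) -> bool -> 'I_n -> bool).
Hypothesis decodes : forall (x : {ffun 'I_n -> bool}) (i j : 'I_n),
  G j i -> D i (fun s => E s x) (x i) j = x j.

Lemma same_codewords_disagreement_closed x y : (forall s, E s x = E s y) ->
  forall v w, x v != y v -> G v w -> x w != y w.
Proof.
move=> Exy v w xyv vw; apply: contra_neq xyv => xyw.
have codes : (fun s => E s x) = (fun s => E s y).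
  exact: functional_extensionality_dep Exy.
by rewrite -(decodes x vw) -(decodes y vw) codes xyw.
Qed.

End IndexCode.

Section MessageGraph.
Variables (n S : nat) (M : 'I_S -> {set 'I_n}).

Lemma msg_connected_sub (C : {set 'I_n}) s : C \subset M s -> msg_connected M C.
Proof.
move=> CM; apply/forallP => a; apply/forallP => b; apply/implyP => /andP [aC bC].
have [<- | ab] := eqVneq a b; first exact: connect0.
apply: connect1; rewrite /= aC bC !andbT /msg_edge ab.
by apply/existsP; exists s; rewrite !(subsetP CM).
Qed.

Variable owner : 'I_n -> 'I_S.
Hypothesis owner_unique : forall j s, j \in M s -> s = owner j.

Lemma msg_connected_owner (C : {set 'I_n}) a b :
  msg_connected M C -> a \in C -> b \in C -> owner a = owner b.
Proof.
move=> /forallP /(_ a) /forallP /(_ b) /implyP conn aC bC.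
have /connectP [p] := conn (introT andP (conj aC bC)).
elim: p a {conn aC} => [|c p IH] a /=; first by move=> _ ->.
case/andP => /and3P [/andP [_ /existsP [s /andP [aM cM]]] _ _] pc e.
by rewrite -(owner_unique aM) (owner_unique cM); exact: IH.
Qed.

End MessageGraph.

Section SingleOwnerCode.
Variables (n S : nat) (G : rel 'I_n) (M : 'I_S -> {set 'I_n}).
Hypothesis loopless : forall v, ~~ G v v.
Variable owner : 'I_n -> 'I_S.
Hypothesis owner_mem : forall j, j \in M (owner j).
Hypothesis owner_unique : forall j s, j \in M s -> s = owner j.

Definition conn_leaf_sccs : {set {set 'I_n}} :=
  [set C | is_leaf_scc G C && msg_connected M C].

Definition pivoted v := scc G v \in conn_leaf_sccs.

Definition pivots : {set 'I_n} := [set v | pivoted v && (scc_rep G v == v)].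

Definition non_leaves : {set 'I_n} := [set i | [exists j, G i j]].

Definition coded_by s : {set 'I_n} :=
  [set v in non_leaves :\: pivots | owner v == s].

Lemma pivoted_leaf v : pivoted v -> is_leaf_scc G (scc G v).
Proof. by rewrite /pivoted inE => /andP []. Qed.

Lemma scc_rep_pivot v : pivoted v -> scc_rep G v \in pivots.
Proof.
have rep_scc : scc G (scc_rep G v) = scc G v := scc_eq (scc_rep_in G v).
by rewrite inE /pivoted rep_scc (scc_rep_eq rep_scc) eqxx andbT.
Qed.

Lemma card_pivots : #|pivots| = N_conn G M.
Proof.
have scc_inj : {in pivots &, injective (scc G)}.
  move=> u v; rewrite !inE => /andP [_ /eqP {2}<-] /andP [_ /eqP {2}<-].
  exact: scc_rep_eq.
rewrite /N_conn -/conn_leaf_sccs -(card_in_imset scc_inj); apply: eq_card => C.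
apply/imsetP/idP => [[v] | CN]; first by rewrite inE => /andP [vN _] ->.
move: (CN); rewrite inE => /andP [/and3P [/is_sccP [a Ca] _ _] _].
exists (scc_rep G a); last by rewrite (scc_eq (scc_rep_in G a)).
by apply: scc_rep_pivot; rewrite /pivoted -Ca.
Qed.

Lemma pivots_non_leaves : pivots \subset non_leaves.
Proof.
by apply/subsetP => v /setIdP [/pivoted_leaf /leaf_scc_out vG _]; rewrite inE.
Qed.

Lemma sum_card_coded_by : \sum_(s < S) #|coded_by s| = V_out G - N_conn G M.
Proof.
rewrite -card_pivots /V_out -/non_leaves -(setIidPr pivots_non_leaves) -cardsD.
rewrite -sum1_card (partition_big owner predT) //=.
by apply: eq_bigr => s _; rewrite -sum1_card; apply: eq_bigl => v; rewrite inE.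
Qed.

Definition code_bit (x : {ffun 'I_n -> bool}) v :=
  x v (+) (pivoted v && x (scc_rep G v)).

Definition encode s (x : {ffun 'I_n -> bool}) : #|coded_by s|.-tuple bool :=
  map_tuple (code_bit x) (enum_tuple (coded_by s)).

(* The bit of a pivot is never sent: [nth] then falls off the end of the
   codeword and yields [false], which is exactly the pivot's code bit. *)
Definition read_bit (bits : forall s, #|coded_by s|.-tuple bool) v :=
  nth false (bits (owner v)) (index v (enum (coded_by (owner v)))).

Definition decode i (bits : forall s, #|coded_by s|.-tuple bool) xi j :=
  read_bit bits j (+) (pivoted j && (read_bit bits i (+) xi)).

Lemma read_encode x v : v \in non_leaves -> read_bit (encode^~ x) v = code_bit x v.
Proof.
move=> vG; rewrite /read_bit /encode /=.
have [vC | vNC] := boolP (v \in coded_by (owner v)).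
  by rewrite (nth_map v) ?nth_index ?index_mem ?mem_enum.
have /setIdP [vN /eqP rep_v] : v \in pivots.
  by apply: contraNT vNC => vNP; rewrite inE in_setD vNP vG eqxx.
rewrite nth_default; last by rewrite size_map memNindex ?mem_enum.
by rewrite /code_bit vN rep_v addbb.
Qed.

Lemma encode_depends s : depends_only_on (M s) (encode s).
Proof.
move=> x y xy; apply/val_inj/eq_in_map => v /=.
rewrite mem_enum => /setIdP [_ /eqP owner_v].
rewrite /code_bit xy -?owner_v //; case/boolP: (pivoted v) => //=.
rewrite /pivoted inE => /andP [_ conn]; rewrite xy // -owner_v.
by rewrite -(msg_connected_owner owner_unique conn (scc_rep_in G v) (scc_refl G v)).
Qed.

Lemma decode_correct x i j : G j i -> decode i (encode^~ x) (x i) j = x j.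
Proof.
move=> ji; have jN : j \in non_leaves by rewrite inE; apply/existsP; exists i.
rewrite /decode read_encode // /code_bit.
have [jP | _] := boolP (pivoted j); last by rewrite /= !addbF.
have scc_ij : scc G i = scc G j := scc_eq (leaf_scc_closed (pivoted_leaf jP) ji).
have iP : pivoted i by rewrite /pivoted scc_ij.
have iN : i \in non_leaves by rewrite inE leaf_scc_out // scc_ij pivoted_leaf.
rewrite read_encode // /code_bit iP (scc_rep_eq scc_ij) /=.
by case: (x i); case: (x j); case: (x (scc_rep G j)).
Qed.

Lemma index_code_exists : index_code_of_length G M (V_out G - N_conn G M).
Proof.
exists (fun s => #|coded_by s|), encode, decode; split.
- exact: encode_depends.
- exact: decode_correct.
- exact: sum_card_coded_by.
Qed.

Lemma no_leaf_scc_coded_by s v :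
  is_leaf_scc G (scc G v) -> ~~ (scc G v \subset coded_by s).
Proof.
move=> leaf; apply/negP => sub.
have CM : scc G v \subset M s.
  by apply/subsetP => u /(subsetP sub) /setIdP [_ /eqP <-]; exact: owner_mem.
have vP : pivoted v by rewrite /pivoted inE leaf (msg_connected_sub CM).
have /setIdP [/setDP [_]] := subsetP sub _ (scc_rep_in G v).
by rewrite scc_rep_pivot.
Qed.

Section Converse.
Variables (l : 'I_S -> nat)
  (E : forall s : 'I_S, {ffun 'I_n -> bool} -> (l s).-tuple bool)
  (D : 'I_n -> (forall s : 'I_S, (l s).-tuple bool) -> bool -> 'I_n -> bool).
Hypothesis encoders_local : forall s, depends_only_on (M s) (E s).
Hypothesis decodes : forall (x : {ffun 'I_n -> bool}) (i j : 'I_n),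
  G j i -> D i (fun s => E s x) (x i) j = x j.

Lemma codeword_determines_coded_by s (x y : {ffun 'I_n -> bool}) :
  (forall v, v \notin coded_by s -> x v = y v) -> E s x = E s y -> x = y.
Proof.
move=> off Es.
have Et t : E t x = E t y.
  have [-> // | ts] := eqVneq t s.
  apply: encoders_local => u uM; apply: off; apply: contra ts.
  by move=> /setIdP [_ /eqP <-]; rewrite -(owner_unique uM).
apply/ffunP => v0; apply/eqP/negPn/negP => xyv0.
pose diff := [set u | x u != y u].
have diff_sub : diff \subset coded_by s.
  by apply/subsetP => u; rewrite inE; apply: contraR => /off ->; rewrite eqxx.
have diff_closed u w : u \in diff -> G u w -> w \in diff.
  by rewrite !inE; exact: (same_codewords_disagreement_closed decodes Et).
have diff_out u : u \in diff -> exists w, G u w.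
  by move=> /(subsetP diff_sub) /setIdP [/setDP [+ _] _]; rewrite inE => /existsP.
have v0_diff : v0 \in diff by rewrite inE.
have [a /andP [leaf sub]] :=
  closed_set_leaf_scc loopless v0_diff diff_closed diff_out.
by move: (no_leaf_scc_coded_by s leaf); rewrite (subset_trans sub diff_sub).
Qed.

Lemma card_coded_by_le s : #|coded_by s| <= l s.
Proof.
pose f (P : {set 'I_n}) := E s [ffun v => v \in P].
have f_inj : {in powerset (coded_by s) &, injective f}.
  move=> P Q; rewrite !powersetE => PC QC fPQ; apply/setP => v.
  have off u : u \notin coded_by s -> [ffun v => v \in P] u = [ffun v => v \in Q] u.
    move=> uC; rewrite !ffunE.
    by rewrite (contraNF (subsetP PC u)) ?(contraNF (subsetP QC u)).
  by move/ffunP: (codeword_determines_coded_by off fPQ) => /(_ v); rewrite !ffunE.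
have := max_card (mem (f @: powerset (coded_by s))).
by rewrite card_in_imset // card_powerset card_tuple card_bool leq_exp2l.
Qed.

End Converse.

End SingleOwnerCode.

Theorem corollary3 (n S : nat) (G : rel 'I_n) (M : 'I_S -> {set 'I_n})
  (no_self_request : forall i : 'I_n, ~~ G i i)
  (partition : forall j : 'I_n,
     exists s : 'I_S, j \in M s /\ forall s' : 'I_S, j \in M s' -> s' = s) :
  min_index_code_length G M (V_out G - N_conn G M).
Proof.
have [owner owner_spec] := fin_all_exists partition.
have owner_mem j : j \in M (owner j) by case: (owner_spec j).
have owner_unique j s : j \in M s -> s = owner j by case: (owner_spec j) => _; exact.
split; first exact: index_code_exists owner_mem owner_unique.
move=> _ [l [E [D [encoders_local decodes <-]]]].
rewrite -(sum_card_coded_by G M owner); apply: leq_sum => s _.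
exact: (card_coded_by_le no_self_request owner_mem owner_unique
          encoders_local decodes).
Qed.
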